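(* Let $G$ and $H$ be nontrivial groups. Then $|\{x\in G*H: x^2\neq 1\}|=\max\{\aleph_0,|G|,|H|\}$. If moreover at least one of $G,H$ contains an involution, then also $|\{x\in G*H: x^2=1\}|=\max\{\aleph_0,|G|,|H|\}$.
   Context: An involution is an element of order $2$; $G*H$ is the free product. *)

Set Implicit Arguments.

Record group := Group {
  carrier :> Type;
  gmul : carrier -> carrier -> carrier;
  gone : carrier;
  ginv : carrier -> carrier;
  gmulA : forall x y z, gmul x (gmul y z) = gmul (gmul x y) z;
  gmul1l : forall x, gmul gone x = x;
  gmulVl : forall x, gmul (ginv x) x = gone
}.
Arguments gmul {g} _ _.
Arguments gone {g}.
Arguments ginv {g} _.

Record hom (G H : group) := Hom {
  hfun :> G -> H;
  hfunM : forall x y, hfun (gmul x y) = gmul (hfun x) (hfun y)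
}.

Definition is_free_product (G H P : group) (iG : hom G P) (iH : hom H P) : Prop :=
  forall (K : group) (f : hom G K) (g : hom H K),
    (exists h : hom P K, (forall x, h (iG x) = f x) /\ (forall y, h (iH y) = g y)) /\
    (forall h1 h2 : hom P K,
       (forall x, h1 (iG x) = f x) -> (forall y, h1 (iH y) = g y) ->
       (forall x, h2 (iG x) = f x) -> (forall y, h2 (iH y) = g y) ->
       forall p, h1 p = h2 p).

Definition nontrivial (G : group) : Prop := exists x : G, x <> gone.
Definition has_involution (G : group) : Prop :=
  exists x : G, x <> gone /\ gmul x x = gone.

Definition card_le (A B : Type) : Prop :=
  exists f : A -> B, forall a1 a2, f a1 = f a2 -> a1 = a2.

(* |A| = max{aleph_0, |B|, |C|}: each of aleph_0, |B|, |C| is <= |A|,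
   and |A| is <= one of them (the maximum of finitely many cardinals is one of them). *)
Definition card_eq_max_aleph0 (A B C : Type) : Prop :=
  card_le nat A /\ card_le B A /\ card_le C A /\
  (card_le A nat \/ card_le A B \/ card_le A C).

(* Every element of G * H is the product of a unique reduced word (van der Waerden's
   permutation trick), so G * H injects into the lists over G + H, which have
   cardinality max(aleph_0, |G|, |H|) by Hessenberg's theorem k * k = k for infinite k,
   proved with Zorn's lemma and the comparability of cardinals.
   Conversely, fix a <> 1 in G and b <> 1 in H.  A nonempty reduced word whose square
   is again reduced gives an element x with x^2 <> 1; the words (ab)^(n+1) and g b
   (g <> 1) inject aleph_0 and G, and H by symmetry.  If t is an involution of G, the
   conjugates w t w^-1 by reduced words w ending in H are pairwise distinct
   involutions, and w can range over (tb)^n, g b and h. *)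

From Stdlib Require Import Classical ClassicalEpsilon FunctionalExtensionality ProofIrrelevance EqdepFacts FinFun Lia List Cantor.
From mathcomp Require ssreflect ssrbool boolp wochoice.
Import ListNotations.

Local Notation decide := excluded_middle_informative.

Module ZornLemma.
Import ssreflect ssrbool boolp wochoice.

Lemma zorn {T : Type} (R : T -> T -> Prop) (S : T -> Prop) :
  (forall x, S x -> R x x) ->
  (forall x y z, S x -> S y -> S z -> R x y -> R y z -> R x z) ->
  (forall C : T -> Prop, (forall x, C x -> S x) ->
     (forall x y, C x -> C y -> R x y \/ R y x) ->
     exists z, S z /\ forall x, C x -> R x z) ->
  exists z, S z /\ forall x, S x -> R z x -> R x z.
Proof.
move=> Rrefl Rtrans chain_ub.
pose R' : rel {classic T} := fun x y => `[< R x y >].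
pose S' : {pred {classic T}} := fun x => `[< S x >].
have [|y x z /asboolP Sy /asboolP Sx /asboolP Sz /asboolP Rxy /asboolP Ryz|C CS /wo_chainW C_chain|]
    := @Zorn's_lemma _ R' S'.
- by move=> x /asboolP Sx; apply/asboolP; apply: Rrefl.
- by apply/asboolP; apply: (Rtrans x y z).
- have [|x y Cx Cy|z [Sz ub]] := chain_ub (fun x => x \in C).
  + by move=> x /CS /asboolP.
  + by have /orP[/asboolP|/asboolP] := C_chain x y Cx Cy; [left | right].
  + by exists z; [apply/asboolP | move=> x Cx; apply/asboolP; apply: ub].
- move=> z /asboolP Sz z_max; exists z; split=> // x Sx Rzx.
  by apply/asboolP; apply: z_max; apply/asboolP.
Qed.

End ZornLemma.
Import ZornLemma.

Lemma sig_eq (A : Type) (P : A -> Prop) (u v : {x | P x}) :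
  proj1_sig u = proj1_sig v -> u = v.
Proof. apply eq_sig_hprop; intros; apply proof_irrelevance. Qed.

Lemma card_le_refl A : card_le A A.
Proof. exists (fun a => a); auto. Qed.

Lemma card_le_trans A B C : card_le A B -> card_le B C -> card_le A C.
Proof. intros [f f_inj] [g g_inj]; exists (fun a => g (f a)); auto. Qed.

Lemma card_le_sig A (P : A -> Prop) : card_le {x | P x} A.
Proof. exists (@proj1_sig _ _); intros u v; apply sig_eq. Qed.

Lemma card_le_surj {A B} (f : A -> B) : (forall y, exists x, f x = y) -> card_le B A.
Proof.
intros f_onto. exists (fun y => proj1_sig (constructive_indefinite_description _ (f_onto y))).
intros y y'.
destruct (constructive_indefinite_description _ (f_onto y)) as [x <-].
destruct (constructive_indefinite_description _ (f_onto y')) as [x' <-].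
simpl; intros ->; reflexivity.
Qed.

Lemma card_le_injective_on {A B} {P : A -> Prop} {Q : B -> Prop} (b0 : B) :
  card_le {a | P a} {b | Q b} ->
  exists f : A -> B, (forall a, P a -> Q (f a)) /\
    (forall a a', P a -> P a' -> f a = f a' -> a = a').
Proof.
intros [f f_inj].
exists (fun a => match decide (P a) with
                 | left Pa => proj1_sig (f (exist _ a Pa)) | right _ => b0 end).
split.
- intros a Pa; destruct (decide (P a)) as [Pa'|]; [apply proj2_sig | contradiction].
- intros a a' Pa Pa'.
  destruct (decide (P a)); [| contradiction]; destruct (decide (P a')); [| contradiction].
  intros E; apply sig_eq, f_inj in E; exact (f_equal (@proj1_sig _ _) E).
Qed.

Lemma exists_left_inverse_on {A B} (a0 : A) (P : A -> Prop) (f : A -> B) :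
  (forall a a', P a -> P a' -> f a = f a' -> a = a') ->
  exists g : B -> A, forall a, P a -> g (f a) = a.
Proof.
intros f_inj.
exists (fun b => match decide (exists a, P a /\ f a = b) with
                 | left H => proj1_sig (constructive_indefinite_description _ H)
                 | right _ => a0 end).
intros a Pa. destruct (decide _) as [H | H]; [| exfalso; eauto].
destruct (constructive_indefinite_description _ H) as [a' [Pa' E]]; simpl; auto.
Qed.

Lemma exists_glued_function {I X Y} (y0 : Y) (C : I -> Prop)
    (dom : I -> X -> Prop) (val : I -> X -> Y) :
  (forall i j x, C i -> C j -> dom i x -> dom j x -> val i x = val j x) ->
  exists g : X -> Y, forall i x, C i -> dom i x -> g x = val i x.
Proof.
intros compatible.
exists (fun x => match decide (exists i, C i /\ dom i x) with
                 | left H => val (proj1_sig (constructive_indefinite_description _ H)) x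
                 | right _ => y0 end).
intros i x Ci Dx. destruct (decide _) as [H | H]; [| exfalso; eauto].
destruct (constructive_indefinite_description _ H) as [j [Cj Dj]]; simpl; eauto.
Qed.

Lemma chain_directed {T X} (dom : T -> X -> Prop) (R : T -> T -> Prop) (C : T -> Prop) :
  (forall c d, R c d -> forall x, dom c x -> dom d x) ->
  (forall c d, C c -> C d -> R c d \/ R d c) ->
  forall c d, C c -> C d ->
  exists k, C k /\ (forall x, dom c x -> dom k x) /\ (forall x, dom d x -> dom k x).
Proof.
intros R_dom C_chain c d Cc Cd.
destruct (C_chain c d Cc Cd) as [Rcd | Rdc]; [exists d | exists c]; split; eauto.
Qed.

Definition extends {X Y} (c d : (X -> Prop) * (X -> Y)) : Prop :=
  (forall x, fst c x -> fst d x) /\ (forall x, fst c x -> snd c x = snd d x).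

Lemma extends_trans {X Y} (c d k : (X -> Prop) * (X -> Y)) :
  extends c d -> extends d k -> extends c k.
Proof.
intros [cd vcd] [dk vdk]; split; intros x cx; [auto | rewrite vcd by auto; auto].
Qed.

Lemma card_le_total X Y : card_le X Y \/ card_le Y X.
Proof.
destruct (classic (inhabited Y)) as [[y0] | Y_empty].
2: { right; exists (fun y => False_rect X (Y_empty (inhabits y))).
     intros y; destruct (Y_empty (inhabits y)). }
pose (injective_on (c : (X -> Prop) * (X -> Y)) :=
  forall x x', fst c x -> fst c x' -> snd c x = snd c x' -> x = x').
destruct (zorn (@extends X Y) injective_on) as [[D g] [g_inj g_max]].
- intros c _; split; auto.
- intros c d k _ _ _; apply extends_trans.
- intros C C_inj C_chain.
  destruct (exists_glued_function y0 C fst snd) as [g g_val].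
  { intros c d x Cc Cd cx dx.
    destruct (C_chain c d Cc Cd) as [[_ E] | [_ E]]; [| symmetry]; auto. }
  assert (directed := chain_directed fst extends C (fun c d Rcd => proj1 Rcd) C_chain).
  exists (fun x => exists c, C c /\ fst c x, g); split.
  + intros x x' [c [Cc cx]] [d [Cd dx']]; simpl.
    destruct (directed c d Cc Cd) as [k [Ck [ck dk]]].
    rewrite !(g_val k) by auto; apply (C_inj k); auto.
  + intros c Cc; split; simpl; [eauto | intros x cx; symmetry; auto].
- unfold injective_on in g_inj; simpl in *.
  destruct (classic (forall x, D x)) as [D_full | [x0 x0_out]%not_all_ex_not].
  { left; exists g; intros x x'; apply g_inj; auto. }
  destruct (classic (forall y, exists x, D x /\ g x = y)) as [g_onto | [y1 y1_out]%not_all_ex_not].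
  { right; apply card_le_trans with {x | D x}; [| apply card_le_sig].
    apply (card_le_surj (fun u => g (proj1_sig u))).
    intros y; destruct (g_onto y) as [x [Dx <-]]; exists (exist _ x Dx); reflexivity. }
  exfalso; apply x0_out.
  assert (y1_new : forall x, D x -> g x <> y1) by eauto.
  edestruct (g_max (fun x => D x \/ x = x0, fun x => if decide (x = x0) then y1 else g x))
    as [D_sub _]; [| split; simpl | apply D_sub; simpl; auto].
  + intros x x' [Dx | ->] [Dx' | ->]; simpl;
      repeat destruct (decide _); subst; intros E; auto; exfalso; eauto.
  + auto.
  + intros x Dx; destruct (decide (x = x0)); [subst; contradiction | reflexivity].
Qed.

Section Hessenberg.
Variables (A : Type) (e : nat -> A).
Hypothesis e_inj : Injective e.

Definition pairing_on (B : A -> Prop) (p : A -> A -> A) : Prop :=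
  (forall n, B (e n)) /\
  (forall x y, B x -> B y -> B (p x y)) /\
  (forall x y x' y', B x -> B y -> B x' -> B y' -> p x y = p x' y' -> x = x' /\ y = y').

Definition extends_pairing (c d : (A -> Prop) * (A -> A -> A)) : Prop :=
  (forall x, fst c x -> fst d x) /\
  (forall x y, fst c x -> fst c y -> snd c x y = snd d x y).

Lemma pairing_on_range : exists p, pairing_on (fun x => exists n, e n = x) p.
Proof.
destruct (exists_left_inverse_on 0 (fun _ => True) e) as [ue ueK]; [auto |].
exists (fun x y => e (to_nat (ue x, ue y))); split; [| split]; eauto.
intros x y x' y' [n <-] [m <-] [n' <-] [m' <-] E.
apply e_inj, (f_equal of_nat) in E; rewrite !cancel_of_to, !ueK in E by auto.
injection E; intros -> ->; auto.
Qed.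

Lemma pairing_chain_ub (C : (A -> Prop) * (A -> A -> A) -> Prop) c0 :
  C c0 -> (forall c, C c -> pairing_on (fst c) (snd c)) ->
  (forall c d, C c -> C d -> extends_pairing c d \/ extends_pairing d c) ->
  exists u, pairing_on (fst u) (snd u) /\ forall c, C c -> extends_pairing c u.
Proof.
intros Cc0 C_pair C_chain.
destruct (exists_glued_function (e 0) C (fun c xy => fst c (fst xy) /\ fst c (snd xy))
            (fun c xy => snd c (fst xy) (snd xy))) as [g g_val].
{ intros c d [x y] Cc Cd [cx cy] [dx dy]; simpl.
  destruct (C_chain c d Cc Cd) as [[_ E] | [_ E]]; [| symmetry]; auto. }
assert (directed := chain_directed fst extends_pairing C (fun c d Rcd => proj1 Rcd) C_chain).
exists (fun x => exists c, C c /\ fst c x, fun x y => g (x, y)).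
split; [split; [| split] |]; simpl.
- intros n; exists c0; split; [| apply (C_pair c0)]; auto.
- intros x y [c [Cc cx]] [d [Cd dy]].
  destruct (directed c d Cc Cd) as [k [Ck [ck dk]]].
  exists k; split; auto; rewrite (g_val k) by (simpl; auto); apply (C_pair k); auto.
- intros x y x' y' [c1 [C1 x1]] [c2 [C2 y1]] [c3 [C3 x2]] [c4 [C4 y2]].
  destruct (directed c1 c2 C1 C2) as [k1 [Ck1 [k1_1 k1_2]]].
  destruct (directed c3 c4 C3 C4) as [k2 [Ck2 [k2_3 k2_4]]].
  destruct (directed k1 k2 Ck1 Ck2) as [k [Ck [k_1 k_2]]].
  rewrite !(g_val k) by (simpl; auto); apply (C_pair k); auto.
- intros c Cc; split; simpl; [eauto | intros x y cx cy; symmetry; apply (g_val c (x, y)); simpl; auto].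
Qed.

Section Extension.
Variables (B : A -> Prop) (p : A -> A -> A) (h unh : A -> A).
Hypothesis Bp : pairing_on B p.
Hypothesis h_out : forall b, B b -> ~ B (h b).
Hypothesis unhK : forall b, B b -> unh (h b) = b.

(* The pairs of (B u h[B])^2 outside B^2 are coded into B x {0, 1, 2}, hence into B
   through p and the tags e 0, e 1, e 2, and then moved by h into the fresh part h[B]. *)
Definition ext_dom x := B x \/ exists b, B b /\ h b = x.
Definition ext_base x := if decide (B x) then x else unh x.
Definition ext_tag x y := if decide (B x) then 0 else if decide (B y) then 1 else 2.
Definition ext_pair x y :=
  if decide (B x /\ B y) then p x y
  else h (p (p (ext_base x) (ext_base y)) (e (ext_tag x y))).

Lemma ext_base_in x : ext_dom x -> B (ext_base x).
Proof.
unfold ext_base; destruct (decide (B x)); auto.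
intros [? | [b [Bb <-]]]; [contradiction | rewrite unhK; auto].
Qed.

Lemma ext_baseK x : ext_dom x -> ~ B x -> h (ext_base x) = x.
Proof.
unfold ext_base; destruct (decide (B x)); [contradiction |].
intros [? | [b [Bb <-]]] _; [contradiction | rewrite unhK; auto].
Qed.

Lemma ext_base_inj x x' : ext_dom x -> ext_dom x' -> (B x <-> B x') ->
  ext_base x = ext_base x' -> x = x'.
Proof.
intros dx dx' same E; destruct (classic (B x)) as [Bx | nBx].
- unfold ext_base in E; destruct (decide (B x)), (decide (B x')); tauto.
- rewrite <- (ext_baseK x), <- (ext_baseK x'), E; tauto.
Qed.

Lemma ext_tag_inj x y x' y' : ext_tag x y = ext_tag x' y' ->
  (B x <-> B x') /\ (~ B x -> (B y <-> B y')).
Proof.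
unfold ext_tag; destruct (decide (B x)), (decide (B y)), (decide (B x')), (decide (B y'));
  discriminate || tauto.
Qed.

Lemma pairing_extension :
  pairing_on ext_dom ext_pair /\ extends_pairing (B, p) (ext_dom, ext_pair).
Proof.
destruct Bp as [Be [Bclosed Binj]].
assert (h_inj : forall b b', B b -> B b' -> h b = h b' -> b = b').
{ intros b b' Bb Bb' E; rewrite <- (unhK b), <- (unhK b'), E; auto. }
assert (outer : forall x y, ext_dom x -> ext_dom y -> ~ (B x /\ B y) ->
                 ext_pair x y = h (p (p (ext_base x) (ext_base y)) (e (ext_tag x y))) /\
                 B (p (p (ext_base x) (ext_base y)) (e (ext_tag x y)))).
{ intros x y dx dy nB; unfold ext_pair; destruct (decide _); [contradiction |].
  split; [reflexivity | apply Bclosed; auto using ext_base_in]. }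
split; [split; [| split] | split]; simpl.
- left; auto.
- intros x y dx dy; destruct (classic (B x /\ B y)) as [[Bx By] | nB].
  + unfold ext_pair; destruct (decide _); [left; auto | tauto].
  + destruct (outer x y dx dy nB) as [-> Bz]; right; eauto.
- intros x y x' y' dx dy dx' dy'.
  destruct (classic (B x /\ B y)) as [[Bx By] | nB], (classic (B x' /\ B y')) as [[Bx' By'] | nB'].
  + unfold ext_pair; do 2 (destruct (decide _); [| tauto]); apply Binj; auto.
  + destruct (outer x' y' dx' dy' nB') as [-> Bz].
    unfold ext_pair; destruct (decide _); [| tauto].
    intros E; exfalso; apply (h_out _ Bz); rewrite <- E; auto.
  + destruct (outer x y dx dy nB) as [-> Bz].
    unfold ext_pair; destruct (decide _); [| tauto].
    intros E; exfalso; apply (h_out _ Bz); rewrite E; auto.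
  + destruct (outer x y dx dy nB) as [-> Bz], (outer x' y' dx' dy' nB') as [-> Bz'].
    intros E; apply h_inj in E; auto.
    apply Binj in E as [E tags]; auto using ext_base_in.
    apply Binj in E as [Ex Ey]; auto using ext_base_in.
    apply e_inj, ext_tag_inj in tags as [sx sy].
    split; apply ext_base_inj; auto; destruct (classic (B x)); tauto.
- intros x Bx; left; auto.
- intros x y Bx By; unfold ext_pair; destruct (decide _); tauto.
Qed.

End Extension.

Lemma pairing_of_small_complement B p : pairing_on B p ->
  card_le {a | ~ B a} {a | B a} ->
  exists q : A -> A -> A, forall x y x' y', q x y = q x' y' -> x = x' /\ y = y'.
Proof.
intros [Be [Bclosed Binj]] small.
destruct (card_le_injective_on (e 0) small) as [k [k_in k_inj]].
pose (j a := if decide (B a) then p a (e 0) else p (k a) (e 1)).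
assert (j_in : forall a, B (j a)).
{ intros a; unfold j; destruct (decide (B a)); auto. }
assert (j_inj : forall a a', j a = j a' -> a = a').
{ intros a a'; unfold j; destruct (decide (B a)), (decide (B a')); intros E;
    apply Binj in E as [E tags]; auto; apply e_inj in tags; discriminate || auto. }
exists (fun x y => p (j x) (j y)); intros x y x' y' E.
apply Binj in E as [Ex Ey]; auto.
Qed.

Theorem hessenberg :
  exists q : A -> A -> A, forall x y x' y', q x y = q x' y' -> x = x' /\ y = y'.
Proof.
destruct (zorn extends_pairing (fun c => pairing_on (fst c) (snd c))) as [[B p] [Bp B_max]].
- intros c _; split; auto.
- intros c d k _ _ _ [cd vcd] [dk vdk]; split; intros; [auto | rewrite vcd by auto; auto].
- intros C C_pair C_chain; destruct (classic (exists c, C c)) as [[c0 Cc0] | C_empty].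
  + apply (pairing_chain_ub C c0); auto.
  + destruct pairing_on_range as [p0 p0_pair].
    exists (fun x => exists n, e n = x, p0); split; [exact p0_pair | intros c Cc; exfalso; eauto].
- simpl in Bp; destruct (card_le_total {a | ~ B a} {a | B a}) as [small | large].
  + apply (pairing_of_small_complement B p); auto.
  + exfalso; destruct (card_le_injective_on (e 0) large) as [h [h_out h_inj]].
    destruct (exists_left_inverse_on (e 0) B h h_inj) as [unh unhK].
    destruct (pairing_extension B p h unh Bp h_out unhK) as [ext_Bp ext].
    destruct (B_max (ext_dom B h, ext_pair B p h unh) ext_Bp ext) as [sub _].
    apply (h_out (e 0)); [apply Bp |].
    apply sub; right; exists (e 0); split; [apply Bp | reflexivity].
Qed.

Lemma card_le_list_self : card_le (list A) A.
Proof.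
destruct hessenberg as [q q_inj].
pose (code := fix code (l : list A) : A := match l with [] => e 0 | x :: l => q x (code l) end).
exists (fun l => q (e (length l)) (code l)); intros l1 l2 E.
apply q_inj in E as [E1 E2]; apply e_inj in E1.
revert l2 E1 E2; induction l1 as [| x l1 IH]; intros [| y l2] E1 E2; try discriminate; auto.
simpl in E2; apply q_inj in E2 as [-> E2]; f_equal; apply IH; auto.
Qed.

End Hessenberg.

Lemma card_le_list_map X Y : card_le X Y -> card_le (list X) (list Y).
Proof.
intros [f f_inj]; exists (map f).
intros l1; induction l1 as [| x l1 IH]; intros [| y l2] E; try discriminate; auto.
simpl in E; injection E; intros E2 E1; apply f_inj in E1; subst; f_equal; auto.
Qed.

Lemma card_le_list_sum X Y Z :
  card_le nat Z -> card_le X Z -> card_le Y Z -> card_le (list (X + Y)) Z.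
Proof.
intros [e e_inj] [f f_inj] [g g_inj].
destruct (hessenberg Z e e_inj) as [q q_inj].
apply card_le_trans with (list Z); [| exact (card_le_list_self Z e e_inj)].
apply card_le_list_map.
exists (fun s => match s with inl x => q (f x) (e 0) | inr y => q (g y) (e 1) end).
intros [x | y] [x' | y'] E; apply q_inj in E as [E tags]; apply e_inj in tags;
  discriminate || (f_equal; auto).
Qed.

Lemma card_le_list_sum_max X Y :
  card_le (list (X + Y)) nat \/ card_le (list (X + Y)) X \/ card_le (list (X + Y)) Y.
Proof.
destruct (card_le_total X Y) as [XY | YX].
- destruct (card_le_total Y nat) as [Yn | nY].
  + left; apply card_le_list_sum; eauto using card_le_refl, card_le_trans.
  + right; right; apply card_le_list_sum; eauto using card_le_refl, card_le_trans.
- destruct (card_le_total X nat) as [Xn | nX].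
  + left; apply card_le_list_sum; eauto using card_le_refl, card_le_trans.
  + right; left; apply card_le_list_sum; eauto using card_le_refl, card_le_trans.
Qed.

Section GroupFacts.
Variable G : group.

Lemma mulgV (x : G) : gmul x (ginv x) = gone.
Proof.
rewrite <- (gmul1l _ (gmul x (ginv x))), <- (gmulVl _ (ginv x)) at 1.
rewrite <- gmulA, (gmulA _ (ginv x) x (ginv x)), gmulVl, gmul1l; apply gmulVl.
Qed.

Lemma mulg1 (x : G) : gmul x gone = x.
Proof. rewrite <- (gmulVl _ x), gmulA, mulgV, gmul1l; reflexivity. Qed.

Lemma invg_uniq (x y : G) : gmul y x = gone -> y = ginv x.
Proof. intros E; rewrite <- (mulg1 y), <- (mulgV x), gmulA, E, gmul1l; reflexivity. Qed.

Lemma mulgI (a x y : G) : gmul a x = gmul a y -> x = y.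
Proof. intros E; rewrite <- (gmul1l _ x), <- (gmul1l _ y), <- (gmulVl _ a), <- !gmulA, E; reflexivity. Qed.

Lemma invg_eq1 (x : G) : ginv x = gone -> x = gone.
Proof. intros E; rewrite <- (gmulVl _ x), E, gmul1l; reflexivity. Qed.

Lemma conj_involution (q r t : G) : gmul r q = gone -> gmul t t = gone ->
  gmul (gmul q (gmul t r)) (gmul q (gmul t r)) = gone.
Proof.
intros rq tt; assert (qr : gmul q r = gone) by (rewrite (invg_uniq _ _ rq); apply mulgV).
rewrite <- !gmulA, (gmulA _ r q), rq, gmul1l, (gmulA _ t t), tt, gmul1l; exact qr.
Qed.

End GroupFacts.

Lemma hom1 G K (f : hom G K) : f gone = gone.
Proof. apply (mulgI _ (f gone)); rewrite <- hfunM, gmul1l, mulg1; reflexivity. Qed.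

Record perm (X : Type) := Perm {
  pfun : X -> X;
  pinv : X -> X;
  pfunK : forall x, pfun (pinv x) = x;
  pinvK : forall x, pinv (pfun x) = x
}.
Arguments pfun {X} _ _.
Arguments pinv {X} _ _.

Lemma perm_ext X (s t : perm X) : (forall x, pfun s x = pfun t x) -> s = t.
Proof.
intros E; assert (Einv : forall x, pinv s x = pinv t x).
{ intros x; rewrite <- (pfunK _ t x) at 1; rewrite <- E, pinvK; reflexivity. }
destruct s as [f1 g1 fg1 gf1], t as [f2 g2 fg2 gf2]; simpl in *.
assert (f1 = f2) by (apply functional_extensionality; auto).
assert (g1 = g2) by (apply functional_extensionality; auto); subst.
f_equal; apply proof_irrelevance.
Qed.

Section Symmetric.
Variable X : Type.

Definition perm_mul (s t : perm X) : perm X.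
Proof.
refine (Perm _ (fun x => pfun s (pfun t x)) (fun x => pinv t (pinv s x)) _ _); intros x.
- rewrite !pfunK; reflexivity.
- rewrite !pinvK; reflexivity.
Defined.

Definition perm_one : perm X := Perm _ (fun x => x) (fun x => x) (fun _ => eq_refl) (fun _ => eq_refl).

Definition perm_inv (s : perm X) : perm X := Perm _ (pinv s) (pfun s) (pinvK _ s) (pfunK _ s).

Definition Sym : group.
Proof.
refine {| carrier := perm X; gmul := perm_mul; gone := perm_one; ginv := perm_inv |};
  intros; apply perm_ext; intros; simpl; [reflexivity | reflexivity | apply pinvK].
Defined.

End Symmetric.

Section Words.
Variables G H : group.

Definition letter := (carrier G + carrier H)%type.

Definition letter_ne1 (z : letter) : Prop :=
  match z with inl g => g <> gone | inr h => h <> gone end.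

Definition other_factor (z z' : letter) : Prop :=
  match z, z' with inl _, inr _ | inr _, inl _ => True | _, _ => False end.

Fixpoint reduced (w : list letter) : Prop :=
  match w with
  | [] => True
  | z :: w' => letter_ne1 z /\ reduced w' /\
               match w' with [] => True | z' :: _ => other_factor z z' end
  end.

Definition actG (g : G) (w : list letter) : list letter :=
  match w with
  | inl g' :: w' => if decide (gmul g g' = gone) then w' else inl (gmul g g') :: w'
  | _ => if decide (g = gone) then w else inl g :: w
  end.

Definition actH (h : H) (w : list letter) : list letter :=
  match w with
  | inr h' :: w' => if decide (gmul h h' = gone) then w' else inr (gmul h h') :: w'
  | _ => if decide (h = gone) then w else inr h :: w
  end.

Lemma reduced_actG g w : reduced w -> reduced (actG g w).
Proof.
destruct w as [| [g0 | h0] w']; simpl; intros w_red;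
  repeat destruct (decide _); simpl; tauto.
Qed.

Lemma reduced_actH h w : reduced w -> reduced (actH h w).
Proof.
destruct w as [| [g0 | h0] w']; simpl; intros w_red;
  repeat destruct (decide _); simpl; tauto.
Qed.

Lemma actG1 w : reduced w -> actG gone w = w.
Proof.
destruct w as [| [g0 | h0] w']; simpl; intros w_red;
  rewrite ?gmul1l; destruct (decide _); tauto || congruence.
Qed.

Lemma actH1 w : reduced w -> actH gone w = w.
Proof.
destruct w as [| [g0 | h0] w']; simpl; intros w_red;
  rewrite ?gmul1l; destruct (decide _); tauto || congruence.
Qed.

Lemma actGM g g' w : reduced w -> actG g (actG g' w) = actG (gmul g g') w.
Proof.
destruct w as [| [g0 | h0] w']; simpl; intros w_red.
- destruct (decide (g' = gone)) as [-> |]; simpl; rewrite ?mulg1; reflexivity.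
- destruct (decide (gmul g' g0 = gone)) as [E |]; simpl.
  + replace (gmul (gmul g g') g0) with g by (rewrite <- gmulA, E, mulg1; reflexivity).
    destruct w' as [| [] w'']; simpl in *; tauto || reflexivity.
  + rewrite gmulA; reflexivity.
- destruct (decide (g' = gone)) as [-> |]; simpl; rewrite ?mulg1; reflexivity.
Qed.

Lemma actHM h h' w : reduced w -> actH h (actH h' w) = actH (gmul h h') w.
Proof.
destruct w as [| [g0 | h0] w']; simpl; intros w_red.
- destruct (decide (h' = gone)) as [-> |]; simpl; rewrite ?mulg1; reflexivity.
- destruct (decide (h' = gone)) as [-> |]; simpl; rewrite ?mulg1; reflexivity.
- destruct (decide (gmul h' h0 = gone)) as [E |]; simpl.
  + replace (gmul (gmul h h') h0) with h by (rewrite <- gmulA, E, mulg1; reflexivity).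
    destruct w' as [| [] w'']; simpl in *; tauto || reflexivity.
  + rewrite gmulA; reflexivity.
Qed.

Lemma actG_cons g w : reduced (inl g :: w) -> actG g w = inl g :: w.
Proof. destruct w as [| [] w']; simpl; intros; repeat destruct (decide _); tauto. Qed.

Lemma actH_cons h w : reduced (inr h :: w) -> actH h w = inr h :: w.
Proof. destruct w as [| [] w']; simpl; intros; repeat destruct (decide _); tauto. Qed.

Definition rword := {w : list letter | reduced w}.

Definition permG (g : G) : perm rword.
Proof.
refine (Perm _ (fun w => exist _ _ (reduced_actG g _ (proj2_sig w)))
               (fun w => exist _ _ (reduced_actG (ginv g) _ (proj2_sig w))) _ _);
  intros [w w_red]; apply sig_eq; simpl; rewrite actGM by (try apply reduced_actG; auto).
- rewrite mulgV; apply actG1; auto.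
- rewrite gmulVl; apply actG1; auto.
Defined.

Definition permH (h : H) : perm rword.
Proof.
refine (Perm _ (fun w => exist _ _ (reduced_actH h _ (proj2_sig w)))
               (fun w => exist _ _ (reduced_actH (ginv h) _ (proj2_sig w))) _ _);
  intros [w w_red]; apply sig_eq; simpl; rewrite actHM by (try apply reduced_actH; auto).
- rewrite mulgV; apply actH1; auto.
- rewrite gmulVl; apply actH1; auto.
Defined.

Definition homG : hom G (Sym rword).
Proof.
refine (Hom G (Sym rword) permG _); intros g g'; apply perm_ext; intros [w w_red].
apply sig_eq; simpl; symmetry; apply actGM; auto.
Defined.

Definition homH : hom H (Sym rword).
Proof.
refine (Hom H (Sym rword) permH _); intros h h'; apply perm_ext; intros [w w_red].
apply sig_eq; simpl; symmetry; apply actHM; auto.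
Defined.

End Words.

Arguments letter_ne1 {G H}.
Arguments other_factor {G H}.
Arguments reduced {G H}.

Section WordInverse.
Variables G H : group.

Definition letter_inv (z : letter G H) : letter G H :=
  match z with inl g => inl (ginv g) | inr h => inr (ginv h) end.

Definition word_inv (w : list (letter G H)) := rev (map letter_inv w).

Lemma length_word_inv w : length (word_inv w) = length w.
Proof. unfold word_inv; rewrite length_rev, length_map; reflexivity. Qed.

Lemma reduced_app_l (w w' : list (letter G H)) : reduced (w ++ w') -> reduced w.
Proof.
induction w as [| z w IH]; simpl; auto; intros [z_ne1 [w_red alt]]; repeat split; auto.
destruct w; simpl in *; auto.
Qed.

Lemma reduced_app_cons (w : list (letter G H)) z w' :
  reduced (w ++ [z]) -> reduced (z :: w') -> reduced (w ++ z :: w').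
Proof.
induction w as [| y w IH]; simpl; auto; intros [y_ne1 [w_red alt]] zw'_red; repeat split; auto.
destruct w; simpl in *; auto.
Qed.

Lemma reduced_rev_snoc (w : list (letter G H)) z : reduced (z :: w) -> reduced (rev w ++ [z]).
Proof.
revert z; induction w as [| y w IH]; intros z zw_red; simpl in *; [tauto |].
rewrite <- app_assoc; apply reduced_app_cons; [apply IH; tauto |].
destruct zw_red as [z_ne1 [[y_ne1 [w_red _]] alt]]; simpl; repeat split; auto.
destruct z, y; simpl in *; auto.
Qed.

Lemma reduced_rev (w : list (letter G H)) : reduced w -> reduced (rev w).
Proof. destruct w; simpl; auto using reduced_rev_snoc. Qed.

Lemma reduced_map_inv (w : list (letter G H)) : reduced w -> reduced (map letter_inv w).
Proof.
induction w as [| z w IH]; simpl; auto; intros [z_ne1 [w_red alt]]; repeat split; auto.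
- destruct z; simpl in *; intros E; apply z_ne1, invg_eq1; auto.
- destruct w as [| y w]; simpl; auto; destruct z, y; simpl in *; auto.
Qed.

Lemma reduced_conj (w : list (letter G H)) (t : G) : ginv t = t ->
  reduced (w ++ [inl t]) -> reduced (w ++ inl t :: word_inv w).
Proof.
intros t_inv wt_red; apply reduced_app_cons; auto.
assert (inv_red : reduced (word_inv (w ++ [inl t])))
  by (apply reduced_rev, reduced_map_inv; auto).
unfold word_inv in inv_red; rewrite map_app, rev_app_distr in inv_red; simpl in inv_red.
rewrite t_inv in inv_red; exact inv_red.
Qed.

End WordInverse.

Arguments letter_inv {G H}.
Arguments word_inv {G H}.

Lemma app_inj_length A (w1 w2 v1 v2 : list A) :
  length w1 = length w2 -> w1 ++ v1 = w2 ++ v2 -> w1 = w2.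
Proof.
revert w2; induction w1 as [| x w1 IH]; intros [| y w2] E1 E2; simpl in *; try discriminate; auto.
injection E2; intros; subst; f_equal; auto.
Qed.

Lemma free_product_sym {G H P} {iG : hom G P} {iH : hom H P} :
  is_free_product iG iH -> is_free_product iH iG.
Proof.
intros FP K f g; destruct (FP K g f) as [[k [kG kH]] uniq]; split; eauto.
Qed.

Section FreeProduct.
Context {G H P : group} {iG : hom G P} {iH : hom H P}.

Definition embed (z : letter G H) : P := match z with inl g => iG g | inr h => iH h end.

Fixpoint wprod (w : list (letter G H)) : P :=
  match w with [] => gone | z :: w => gmul (embed z) (wprod w) end.

Lemma wprod_app w w' : wprod (w ++ w') = gmul (wprod w) (wprod w').
Proof. induction w as [| z w IH]; simpl; [rewrite gmul1l | rewrite IH, gmulA]; reflexivity. Qed.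

Lemma wprod_word_inv w : gmul (wprod (word_inv w)) (wprod w) = gone.
Proof.
induction w as [| z w IH]; simpl; [apply gmul1l |].
unfold word_inv in *; simpl; rewrite wprod_app; simpl; rewrite mulg1.
rewrite <- gmulA, (gmulA _ (embed (letter_inv z))).
replace (gmul (embed (letter_inv z)) (embed z)) with (@gone P)
  by (destruct z; simpl; rewrite <- hfunM, gmulVl; symmetry; apply hom1).
rewrite gmul1l; exact IH.
Qed.

Lemma words_mul_closed x y : (exists w, wprod w = x) -> (exists w, wprod w = y) ->
  exists w, wprod w = gmul x y.
Proof. intros [w <-] [w' <-]; exists (w ++ w'); apply wprod_app. Qed.

Lemma words_inv_closed x : (exists w, wprod w = x) -> exists w, wprod w = ginv x.
Proof. intros [w <-]; exists (word_inv w); apply invg_uniq, wprod_word_inv. Qed.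

Definition word_subgroup : group.
Proof.
refine {| carrier := {x : P | exists w, wprod w = x};
          gmul u v := exist _ _ (words_mul_closed _ _ (proj2_sig u) (proj2_sig v));
          gone := exist _ gone (ex_intro _ [] eq_refl);
          ginv u := exist _ _ (words_inv_closed _ (proj2_sig u)) |};
  intros; apply sig_eq; simpl; [apply gmulA | apply gmul1l | apply gmulVl].
Defined.

Lemma wprod1 z : wprod [z] = embed z.
Proof. apply mulg1. Qed.

Definition word_subgroup_inG : hom G word_subgroup.
Proof.
refine (Hom G word_subgroup (fun g => exist _ (iG g) (ex_intro _ [inl g] (wprod1 (inl g)))) _).
intros; apply sig_eq, hfunM.
Defined.

Definition word_subgroup_inH : hom H word_subgroup.
Proof.
refine (Hom H word_subgroup (fun h => exist _ (iH h) (ex_intro _ [inr h] (wprod1 (inr h)))) _).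
intros; apply sig_eq, hfunM.
Defined.

Hypothesis FP : is_free_product iG iH.

(* The retraction of P onto the subgroup of word products agrees with the identity on
   both factors, hence is the identity. *)
Lemma wprod_surj (x : P) : exists w, wprod w = x.
Proof.
destruct (proj1 (FP _ word_subgroup_inG word_subgroup_inH)) as [psi [psiG psiH]].
pose (c := Hom P P (fun x => proj1_sig (psi x))
                   (fun x y => f_equal (@proj1_sig _ _) (hfunM psi x y))).
pose (id := Hom P P (fun x => x) (fun _ _ => eq_refl)).
assert (E : c x = id x)
  by (apply (proj2 (FP P iG iH)); intros; simpl; rewrite ?psiG, ?psiH; reflexivity).
simpl in E; rewrite <- E; apply proj2_sig.
Qed.

(* van der Waerden's trick: P acts on reduced words through the permutation
   representations of G and H, and the empty word recovers each reduced word
   from its product. *)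
Lemma wprod_reduced_inj w w' : reduced w -> reduced w' -> wprod w = wprod w' -> w = w'.
Proof.
destruct (proj1 (FP _ (homG G H) (homH G H))) as [phi [phiG phiH]].
assert (act : forall u (v : rword G H), reduced (u ++ proj1_sig v) ->
                proj1_sig (pfun (phi (wprod u)) v) = u ++ proj1_sig v).
{ induction u as [| z u IH]; intros v uv_red; simpl.
  - rewrite hom1; reflexivity.
  - rewrite hfunM; simpl in uv_red |- *.
    destruct z as [g | h]; simpl; [rewrite phiG | rewrite phiH]; simpl; rewrite IH by tauto;
      [apply actG_cons | apply actH_cons]; auto. }
assert (normal : forall u, reduced u -> proj1_sig (pfun (phi (wprod u)) (exist _ [] I)) = u)
  by (intros; rewrite act; simpl; rewrite ?app_nil_r; auto).
intros w_red w'_red E; rewrite <- (normal w), <- (normal w'), E; auto.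
Qed.

Lemma wprod_reduced_neq1 w : reduced w -> w <> [] -> wprod w <> gone.
Proof. intros w_red w_ne E; apply w_ne, (wprod_reduced_inj w []); simpl; auto. Qed.

Lemma card_le_free_product_max (Q : P -> Prop) :
  card_le {x | Q x} nat \/ card_le {x | Q x} G \/ card_le {x | Q x} H.
Proof.
assert (le_words : card_le {x | Q x} (list (letter G H)))
  by (apply card_le_trans with P; [apply card_le_sig | apply (card_le_surj wprod wprod_surj)]).
destruct (card_le_list_sum_max G H) as [le | [le | le]]; [left | right; left | right; right];
  eapply card_le_trans; eauto.
Qed.

Lemma card_le_non_involutions T (m : T -> list (letter G H)) : Injective m ->
  (forall x, reduced (m x ++ m x)) -> (forall x, m x <> []) ->
  card_le T {x : P | gmul x x <> gone}.
Proof.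
intros m_inj m_red m_ne.
assert (sq : forall x, gmul (wprod (m x)) (wprod (m x)) <> gone).
{ intros x; rewrite <- wprod_app; apply wprod_reduced_neq1; auto.
  intros E; apply app_eq_nil in E; apply (m_ne x); tauto. }
exists (fun x => exist (fun y : P => gmul y y <> gone) _ (sq x)); intros x x' E.
apply m_inj, wprod_reduced_inj; eauto using reduced_app_l.
exact (f_equal (@proj1_sig _ _) E).
Qed.

Lemma card_le_involutions T (m : T -> list (letter G H)) (t : G) : Injective m ->
  gmul t t = gone -> (forall x, reduced (m x ++ [inl t])) ->
  card_le T {x : P | gmul x x = gone}.
Proof.
intros m_inj tt m_red.
assert (t_inv : ginv t = t) by (symmetry; apply invg_uniq; auto).
pose (conj x := m x ++ inl t :: word_inv (m x)).
assert (sq : forall x, gmul (wprod (conj x)) (wprod (conj x)) = gone).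
{ intros x; unfold conj; rewrite wprod_app; simpl; apply conj_involution.
  - apply wprod_word_inv.
  - rewrite <- hfunM, tt; apply hom1. }
exists (fun x => exist (fun y : P => gmul y y = gone) _ (sq x)); intros x x' E.
apply (f_equal (@proj1_sig _ _)), wprod_reduced_inj in E; try (apply reduced_conj; auto).
unfold conj in E.
assert (len : length (m x) = length (m x')).
{ apply (f_equal (@length _)) in E; rewrite !length_app in E; simpl in E.
  rewrite !length_word_inv in E; lia. }
exact (m_inj _ _ (app_inj_length _ _ _ _ _ len E)).
Qed.

Section Families.
Context {a : G} {b : H} (a_ne1 : a <> gone) (b_ne1 : b <> gone).

Fixpoint alt_word (k : nat) : list (letter G H) :=
  match k with 0 => [] | S k => inl a :: inr b :: alt_word k end.

Lemma alt_word_app k j : alt_word k ++ alt_word j = alt_word (k + j).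
Proof. induction k; simpl; [| rewrite IHk]; reflexivity. Qed.

Lemma length_alt_word k : length (alt_word k) = 2 * k.
Proof. induction k; simpl; lia. Qed.

Lemma alt_word_inj : Injective alt_word.
Proof. intros k j E; apply (f_equal (@length _)) in E; rewrite !length_alt_word in E; lia. Qed.

Lemma reduced_alt_word_snoc k (t : G) : t <> gone -> reduced (alt_word k ++ [inl t]).
Proof. intros t_ne1; induction k as [| [] IH]; simpl in *; tauto. Qed.

Lemma card_le_nat_non_involutions : card_le nat {x : P | gmul x x <> gone}.
Proof.
apply (card_le_non_involutions _ (fun n => alt_word (S n))).
- intros n m E; apply alt_word_inj in E; congruence.
- intros n; rewrite alt_word_app; eapply reduced_app_l, (reduced_alt_word_snoc _ a); auto.
- discriminate.
Qed.

Lemma card_le_left_factor_non_involutions : card_le G {x : P | gmul x x <> gone}.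
Proof.
apply (card_le_non_involutions _
  (fun g => if decide (g = gone) then alt_word 2 else [inl g; inr b])).
- intros g g'; repeat destruct (decide _); intros E; simpl in E; congruence.
- intros g; destruct (decide _); simpl; tauto.
- intros g; destruct (decide _); discriminate.
Qed.

Hypothesis aa : gmul a a = gone.

Lemma card_le_nat_involutions : card_le nat {x : P | gmul x x = gone}.
Proof.
apply (card_le_involutions _ alt_word a alt_word_inj aa).
intros k; apply reduced_alt_word_snoc; auto.
Qed.

Lemma card_le_left_factor_involutions : card_le G {x : P | gmul x x = gone}.
Proof.
apply (card_le_involutions _ (fun g => if decide (g = gone) then [inr b] else [inl g; inr b]) a);
  auto.
- intros g g'; repeat destruct (decide _); intros E; simpl in E; congruence.
- intros g; destruct (decide _); simpl; tauto.
Qed.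

Lemma card_le_right_factor_involutions : card_le H {x : P | gmul x x = gone}.
Proof.
apply (card_le_involutions _ (fun h => if decide (h = gone) then [] else [inr h]) a); auto.
- intros h h'; repeat destruct (decide _); intros E; simpl in E; congruence.
- intros h; destruct (decide _); simpl; tauto.
Qed.

End Families.
End FreeProduct.

Theorem lemma20 (G H P : group) (iG : hom G P) (iH : hom H P) :
  is_free_product iG iH ->
  nontrivial G -> nontrivial H ->
  card_eq_max_aleph0 {x : P | gmul x x <> gone} G H /\
  (has_involution G \/ has_involution H ->
   card_eq_max_aleph0 {x : P | gmul x x = gone} G H).
Proof.
intros FP [a a_ne1] [b b_ne1].
pose proof (free_product_sym FP) as FP'.
split; [| intros [[t [t_ne1 tt]] | [t [t_ne1 tt]]]];
  (split; [| split; [| split]]); try apply (card_le_free_product_max FP).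
- exact (card_le_nat_non_involutions FP a_ne1 b_ne1).
- exact (card_le_left_factor_non_involutions FP a_ne1 b_ne1).
- exact (card_le_left_factor_non_involutions FP' b_ne1 a_ne1).
- exact (card_le_nat_involutions FP t_ne1 b_ne1 tt).
- exact (card_le_left_factor_involutions FP t_ne1 b_ne1 tt).
- exact (card_le_right_factor_involutions FP t_ne1 tt).
- exact (card_le_nat_involutions FP' t_ne1 a_ne1 tt).
- exact (card_le_right_factor_involutions FP' t_ne1 tt).
- exact (card_le_left_factor_involutions FP' t_ne1 a_ne1 tt).
Qed.
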